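(* Let $k\ge1$, let $\Gamma\subset\mathbb{R}_+^k$ be a nonempty compact set, and let $(b_n)_{n\ge1}$ be a sequence of functions in $\mathcal{B}_\Gamma$. Then there exists a subsequence $(b_{n'})$ that converges pointwise on $\mathbb{R}^k$ to a limit function $b$, i.e., $\lim_{n'\to\infty}b_{n'}(x)=b(x)$ for every $x\in\mathbb{R}^k$, and this function $b$ belongs to $\mathcal{B}_\Gamma$.
   Context: $\mathcal{B}_\Gamma$ denotes the set of all convex functions $b:\mathbb{R}^k\to\mathbb{R}$ with $b(\mathbf{0})=0$ such that for every $x\in\mathbb{R}^k$ the subdifferential $\partial b(x)=\{g\in\mathbb{R}^k: b(y)-b(x)\ge g\cdot(y-x)\ \forall y\in\mathbb{R}^k\}$ satisfies $\partial b(x)\cap\Gamma\neq\emptyset$. *)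

From HB Require Import structures.
From mathcomp Require Import all_boot all_order all_algebra.
From mathcomp Require Import all_classical all_reals all_analysis.
Set Implicit Arguments. Unset Strict Implicit. Unset Printing Implicit Defensive.
Import Order.TTheory GRing.Theory Num.Theory.
Import numFieldNormedType.Exports.
Local Open Scope classical_set_scope.
Local Open Scope ring_scope.

Definition dotv (R : realType) (k : nat) (u v : 'rV[R]_k) : R :=
  \sum_(i < k) u ord0 i * v ord0 i.

Definition subdiff (R : realType) (k : nat) (b : 'rV[R]_k -> R) (x : 'rV[R]_k)
  : set 'rV[R]_k :=
  [set g | forall y, dotv g (y - x) <= b y - b x].

Definition convex_fun (R : realType) (k : nat) (b : 'rV[R]_k -> R) : Prop :=
  forall (x y : 'rV[R]_k) (t : R), 0 <= t -> t <= 1 ->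
    b (t *: x + (1 - t) *: y) <= t * b x + (1 - t) * b y.

Definition B_Gamma (R : realType) (k : nat) (Gamma : set 'rV[R]_k)
  : set ('rV[R]_k -> R) :=
  [set b | convex_fun b /\ b 0 = 0 /\
           forall x, subdiff b x `&` Gamma !=set0].

Definition in_orthant (R : realType) (k : nat) (Gamma : set 'rV[R]_k) : Prop :=
  forall g, Gamma g -> forall i, 0 <= g ord0 i.

From HB Require Import structures.
From mathcomp Require Import all_boot all_order all_algebra.
From mathcomp Require Import all_classical all_reals all_analysis.
From mathcomp Require Import lra.
Import Order.TTheory GRing.Theory Num.Theory.
Import numFieldNormedType.Exports.
Local Open Scope classical_set_scope.
Local Open Scope ring_scope.

(* Subgradients of every b in B_Gamma lie in the bounded set Gamma, so the b_n
   are equi-Lipschitz, and they vanish at 0.  Tychonoff's theorem and a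
   diagonal extraction give a subsequence converging on the countable dense set
   of rational vectors, and equi-Lipschitzness spreads the convergence to all
   of R^k.  Convexity and b(0) = 0 pass to pointwise limits; at each x, a
   cluster point in the compact Gamma of subgradients of the b_n at x is a
   subgradient of the limit, because each subgradient inequality cuts out a
   closed half-space. *)

Lemma mx_entry_le_norm (K : realDomainType) (m n : nat) (M : 'M[K]_(m, n)) i j :
  `|M i j| <= `|M|.
Proof. by rewrite [leRHS]mx_normrE (le_bigmax _ _ (i, j)). Qed.

Lemma mx_norm_lt (K : realDomainType) (m n : nat) (M : 'M[K]_(m, n)) (e : K) :
  0 < e -> (forall i j, `|M i j| < e) -> `|M| < e.
Proof.
by move=> e0 hM; rewrite [ltLHS]mx_normrE; apply/bigmax_ltP; split => // -[].
Qed.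

Section row_vectors.
Context {R : realType} {k : nat}.
Implicit Types (g v x : 'rV[R]_k).

Lemma norm_dotv_le g v : `|dotv g v| <= k%:R * (`|g| * `|v|).
Proof.
rewrite /dotv; apply: le_trans (ler_norm_sum _ _ _) _.
rewrite -[k in k%:R]card_ord mulr_natl -sumr_const; apply: ler_sum => i _.
by rewrite normrM ler_pM ?mx_entry_le_norm.
Qed.

Lemma dotv_continuous v : continuous (fun g : 'rV[R]_k => dotv g v).
Proof.
apply: continuous_big => [|i _ g]; first exact: add_continuous.
by apply: continuousM; [exact: coord_continuous | exact: cst_continuous].
Qed.

Lemma closed_dotv_le v c : closed [set g | dotv g v <= c].
Proof.
exact: (continuous_closedP _).1 (dotv_continuous v) _ (@closed_le R c).
Qed.

Lemma rV_separable : exists d : nat -> 'rV[R]_k,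
  forall x e, 0 < e -> exists j, `|x - d j| < e.
Proof.
pose d j : 'rV[R]_k := if pickle_inv j is Some q then map_mx ratr q else 0.
exists d => x e e0.
have /choice[q hq] : forall i : 'I_k, exists r : rat, `|x ord0 i - ratr r| < e.
  move=> i; have /rat_in_itvoo[r] : x ord0 i - e < x ord0 i + e by lra.
  by rewrite in_itv /= => hr; exists r; rewrite ltr_distlC.
exists (pickle (\row_i q i)); rewrite /d pickleK_inv.
by apply: mx_norm_lt => // i j; rewrite ord1 !mxE.
Qed.
End row_vectors.

Lemma increasing_extraction (P : nat -> nat -> Prop) :
  (forall n m, exists2 m', (m < m')%N & P n m') ->
  exists phi : nat -> nat,
    (forall n m, (n < m)%N -> (phi n < phi m)%N) /\ forall n, P n (phi n).
Proof.
move=> hP; have /choice[next hnext] : forall p : nat * nat,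
    exists m', (p.2 < m')%N /\ P p.1 m'.
  by move=> [n m]; have [m' ? ?] := hP n m; exists m'.
pose fix phi n := if n is n'.+1 then next (n, phi n') else next (0, 0)%N.
exists phi; split.
  apply: (homo_ltn (fun y x z => @ltn_trans y x z)) => n.
  exact: (hnext (n.+1, phi n)).1.
by case=> [|n]; [exact: (hnext (0, 0)%N).2 | exact: (hnext (n.+1, phi n)).2].
Qed.

Section subsequences.
Context {R : realType}.
Local Notation Rnat := (prod_topology (fun _ : nat => Topological.clone R _)).

Lemma cluster_subseq_cvg (u : nat -> Rnat) (c : Rnat) :
  cluster (u @ \oo) c ->
  exists phi : nat -> nat, (forall n m, (n < m)%N -> (phi n < phi m)%N) /\
    forall j, u (phi n) j @[n --> \oo] --> c j.
Proof.
move=> clu.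
have [phi [phi_incr phi_near]] : exists phi : nat -> nat,
    (forall n m, (n < m)%N -> (phi n < phi m)%N) /\
    forall n j, (j <= n)%N -> `|u (phi n) j - c j| < n.+1%:R^-1.
  apply: (increasing_extraction
    (fun n m => forall j, (j <= n)%N -> `|u m j - c j| < n.+1%:R^-1)) => n m.
  have near_c :
      nbhs c [set f : Rnat | forall j : 'I_n.+1, `|f j - c j| < n.+1%:R^-1].
    apply: (@filter_forall _ _
      (fun (j : 'I_n.+1) (f : Rnat) => `|f j - c j| < n.+1%:R^-1)
      _ (nbhs_filter c)) => j.
    have e0 : 0 < n.+1%:R^-1 :> R by rewrite invr_gt0 ltr0n.
    have := @proj_continuous nat _ (nat_of_ord j) c _
      (nbhsx_ballx (c j : R) _ e0).
    apply: (@filterS _ _ (nbhs_filter c)) => f.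
    by rewrite -ball_normE /= distrC.
  have tail_m : (u @ \oo) [set f | exists2 m', (m < m')%N & f = u m'].
    by apply: filterS (nbhs_infty_gt m) => m' hm'; exists m'.
  have [_ [[m' hm' ->] hu]] := clu _ _ tail_m near_c.
  by exists m' => // j hj; exact: (hu (Ordinal (hj : (j < n.+1)%N))).
exists phi; split => // j; apply/cvgrPdist_lt => e e0; near=> n.
rewrite distrC; apply: lt_le_trans (phi_near n j _) _.
  by near: n; exact: nbhs_infty_ge.
rewrite invf_ple ?posrE ?ltr0n // (@le_trans _ _ n%:R) ?ler_nat //.
by near: n; exact: nbhs_infty_ger.
Unshelve. all: by end_near. Qed.

Lemma bounded_subseq_cvg (u : nat -> nat -> R) (B : nat -> R) :
  (forall n j, `|u n j| <= B j) ->
  exists (phi : nat -> nat) (c : nat -> R),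
    (forall n m, (n < m)%N -> (phi n < phi m)%N) /\
    forall j, u (phi n) j @[n --> \oo] --> c j.
Proof.
move=> uB.
pose box := [set f : Rnat | forall j, `[- B j, B j]%classic (f j)].
have box_compact : compact box.
  exact: tychonoff (fun j => @segment_compact R (- B j) (B j)).
have u_box : ((u : nat -> Rnat) @ \oo) box.
  by apply: (@filterE nat \oo) => n j /=; rewrite in_itv /= -ler_norml.
have [c [_ clu]] := box_compact _ _ u_box.
by have [phi ?] := cluster_subseq_cvg _ _ clu; exists phi, c.
Qed.

Lemma equilipschitz_cvg (V : normedModType R) (f : nat -> V -> R) (L : R)
    (d : nat -> V) :
  0 <= L -> (forall n x y, `|f n x - f n y| <= L * `|x - y|) ->
  (forall x e, 0 < e -> exists j, `|x - d j| < e) ->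
  (forall j, cvgn (fun n => f n (d j))) -> forall x, cvgn (fun n => f n x).
Proof.
move=> L0 fL d_dense fd x; apply/cauchy_cvgP/cauchy_exP => e e0.
have [j xdj] := d_dense x (e / 2 / (L + 1))
  ltac:(by rewrite !divr_gt0 // ltr_wpDl).
set l := lim (f n (d j) @[n --> \oo]); exists l.
have Lxd : L * `|x - d j| < e / 2.
  apply: le_lt_trans (_ : L * `|x - d j| <= (L + 1) * `|x - d j|) _.
    by rewrite ler_wpM2r // lerDl.
  by rewrite mulrC -ltr_pdivlMr ?ltr_wpDl.
rewrite -ball_normE /= near_simpl; near=> n => /=.
have : `|l - f n (d j)| < e / 2.
  by near: n; apply: (cvgrPdist_lt _ _).1 (fd j) _ (divr_gt0 e0 (ltr0n _ 2)).
have := fL n x (d j); have := ler_distD (f n (d j)) l (f n x).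
rewrite (distrC (f n x)); lra.
Unshelve. all: by end_near. Qed.

End subsequences.

Section B_Gamma_closed.
Context {R : realType} {k : nat} {Gamma : set 'rV[R]_k}.

Lemma subdiff_le {b : 'rV[R]_k -> R} {y g} x :
  subdiff b y g -> b y - b x <= k%:R * (`|g| * `|x - y|).
Proof.
move=> /(_ x) gy; rewrite -lerN2 opprB; apply: le_trans gy; rewrite lerNl.
by apply: le_trans (norm_dotv_le g (x - y)); rewrite -normrN ler_norm.
Qed.

Lemma B_Gamma_lipschitz (G : R) b : (forall g, Gamma g -> `|g| <= G) ->
  B_Gamma Gamma b -> forall x y, `|b x - b y| <= k%:R * G * `|x - y|.
Proof.
move=> GammaG [_ [_ hsub]] x y.
have bound g (z : 'rV[R]_k) :
    Gamma g -> k%:R * (`|g| * `|z|) <= k%:R * G * `|z|.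
  by move=> /GammaG gG; rewrite -mulrA ler_wpM2l // ler_wpM2r.
have [g [gx /bound gG]] := hsub x; have [h [hy /bound hG]] := hsub y.
rewrite ler_norml; apply/andP; split.
- by rewrite lerNl opprB; apply: le_trans (subdiff_le x hy) (hG _).
- by rewrite distrC; apply: le_trans (subdiff_le y gx) (gG _).
Qed.

Variables (f : nat -> 'rV[R]_k -> R) (b : 'rV[R]_k -> R).
Hypothesis f_cvg : forall x, f n x @[n --> \oo] --> b x.

Lemma convex_fun_cvg : (forall n, convex_fun (f n)) -> convex_fun b.
Proof.
move=> fconv x y t t0 t1; apply: (ler_cvg_to (f_cvg _)).
  by apply: cvgD; apply: cvgMr; exact: f_cvg.
by apply: nearW => n; exact: fconv.
Qed.

Lemma subdiff_cvg x : compact Gamma ->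
  (forall n, subdiff (f n) x `&` Gamma !=set0) -> subdiff b x `&` Gamma !=set0.
Proof.
move=> Gamma_compact /choice[g gP].
have g_Gamma : (g @ \oo) Gamma.
  by apply: (@filterE nat \oo) => n; exact: (gP n).2.
have [gc [Ggc clg]] := Gamma_compact _ _ g_Gamma.
exists gc; split => // y; apply/ler_addgt0Pr => e e0.
have near_b : \forall n \near \oo, f n y - f n x < b y - b x + e.
  by apply: cvgr_lt; [apply: cvgB; exact: f_cvg | rewrite ltrDl].
have g_halfspace : (g @ \oo) [set h | dotv h (y - x) <= b y - b x + e].
  by apply: filterS near_b => n /ltW; apply: le_trans ((gP n).1 y).
move: clg; rewrite clusterE => /(_ _ g_halfspace).
by rewrite -(closure_id _).1 //; exact: closed_dotv_le.
Qed.

Lemma B_Gamma_cvg : compact Gamma -> (forall n, B_Gamma Gamma (f n)) ->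
  B_Gamma Gamma b.
Proof.
move=> Gamma_compact fB.
split; first exact: convex_fun_cvg (fun n => (fB n).1).
split; last by move=> x; apply: subdiff_cvg => // n; exact: (fB n).2.2.
have := f_cvg 0; have -> : (fun n => f n 0) = fun=> 0.
  by apply: funext => n; exact: (fB n).2.1.
by move=> f0_cvg; exact: cvg_unique _ f0_cvg (cvg_cst _).
Qed.

End B_Gamma_closed.

Theorem proposition3 (R : realType) (k : nat) (hk : (1 <= k)%N)
  (Gamma : set 'rV[R]_k)
  (hGne : Gamma !=set0) (hGc : compact Gamma) (hGpos : in_orthant Gamma)
  (bs : nat -> ('rV[R]_k -> R))
  (hbs : forall n, B_Gamma Gamma (bs n)) :
  exists (phi : nat -> nat) (b : 'rV[R]_k -> R),
    (forall n m, (n < m)%N -> (phi n < phi m)%N) /\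
    (forall x, (fun n => bs (phi n) x) @ \oo --> b x) /\
    B_Gamma Gamma b.
Proof.
have [M [_ hM]] := compact_bounded hGc.
pose G := `|M| + 1.
have GammaG g : Gamma g -> `|g| <= G.
  by apply: hM; rewrite (le_lt_trans (ler_norm M)) // ltrDl.
pose L := k%:R * G.
have L0 : 0 <= L by rewrite mulr_ge0 // addr_ge0.
have bs_lip n x y : `|bs n x - bs n y| <= L * `|x - y|.
  exact: B_Gamma_lipschitz GammaG (hbs n) x y.
have [d d_dense] := @rV_separable R k.
have [|phi [c [phi_incr cvg_d]]] :=
  bounded_subseq_cvg (fun n j => bs n (d j)) (fun j => L * `|d j|).
  by move=> n j; have := bs_lip n (d j) 0; rewrite (hbs n).2.1 !subr0.
have cvg_phi x :
    bs (phi n) x @[n --> \oo] --> lim (bs (phi n) x @[n --> \oo]).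
  apply: (equilipschitz_cvg _ (fun n => bs (phi n)) L d) => // j.
  exact: cvgP (cvg_d j).
exists phi, (fun x => lim (bs (phi n) x @[n --> \oo])).
split; [exact: phi_incr | split; [exact: cvg_phi |]].
exact: B_Gamma_cvg cvg_phi hGc (fun n => hbs (phi n)).
Qed.
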